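(* Let $\mathcal F$ be the set of free superintegrable systems on the complex Euclidean plane, i.e. of $3$-dimensional linear subspaces $W$ of the space of Killing tensors with $g\in W$. For $W\in\mathcal F$ let $P_W:=\{L\in S^2_0:\ L-(\operatorname{tr}L)g\in W\}$. Then $W\mapsto P_W$ is a bijection from $\mathcal F$ onto the Grassmannian $G_2(S^2_0)$ of $2$-planes in the $5$-dimensional space $S^2_0$, and composing with the Plücker map $\operatorname{span}\{L^1,L^2\}\mapsto(a_{ij})\in\mathbb P^9$ identifies $\mathcal F$ with the $6$-dimensional projective variety of skew-symmetric $5\times5$ matrices $$\begin{bmatrix}0&a_{30}&a_{20}&a_{10}&a_{00}\\-a_{30}&0&a_{21}&a_{11}&a_{01}\\-a_{20}&-a_{21}&0&a_{12}&a_{02}\\-a_{10}&-a_{11}&-a_{12}&0&a_{03}\\-a_{00}&-a_{01}&-a_{02}&-a_{03}&0\end{bmatrix}$$ of rank two (up to scalar), i.e. with the subvariety of $\mathbb P^9$ defined by the Plücker relations $a_{03}a_{21}-a_{02}a_{11}+a_{01}a_{12}=0$, $a_{03}a_{20}-a_{02}a_{10}+a_{00}a_{12}=0$, $a_{03}a_{30}-a_{01}a_{10}+a_{00}a_{11}=0$, $a_{02}a_{30}-a_{01}a_{20}+a_{00}a_{21}=0$, $a_{12}a_{30}-a_{11}a_{20}+a_{10}a_{21}=0$.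
   Context: Work on the complex Euclidean plane $\mathbb C^2$ with null coordinates $(z,w)$ and the flat holomorphic metric $g$ with $g_{zz}=g_{ww}=0$, $g_{zw}=g_{wz}=1$. A Killing tensor is a symmetric tensor field $K$ with $K_{ij,k}+K_{jk,i}+K_{ki,j}=0$; a special conformal Killing tensor (SCKT) is a symmetric tensor field $L$ with $L_{ij,k}=\tfrac12(\lambda_ig_{jk}+\lambda_jg_{ik})$, $\lambda=\operatorname{tr}L=g^{ij}L_{ij}$, $\lambda_i=\partial_i\lambda$. On this plane the SCKTs are exactly the tensors with components $L_{zz}=A_{zz}+2b_zw+cw^2$, $L_{ww}=A_{ww}+2b_wz+cz^2$, $L_{zw}=A_{zw}+b_zz+b_ww+czw$ for complex constants $A_{zz},A_{zw},A_{ww},b_z,b_w,c$, and $L\mapsto L-(\operatorname{tr}L)g$ is a linear isomorphism from SCKTs onto Killing tensors sending $g$ to $-g$. Let $S^2_0$ be the $5$-dimensional space of SCKTs with $A_{zw}=0$. For $L^1,L^2\in S^2_0$ (with parameters carrying superscripts $1,2$) the Plücker coordinates of $\operatorname{span}\{L^1,L^2\}$ are $a_{30}=2(A^1_{zz}b^2_z-b^1_zA^2_{zz})$, $a_{20}=A^1_{zz}c^2-c^1A^2_{zz}$, $a_{10}=2(A^1_{zz}b^2_w-b^1_wA^2_{zz})$, $a_{00}=A^1_{zz}A^2_{ww}-A^1_{ww}A^2_{zz}$, $a_{21}=2(b^1_zc^2-c^1b^2_z)$, $a_{11}=4(b^1_zb^2_w-b^1_wb^2_z)$, $a_{01}=2(b^1_zA^2_{ww}-A^1_{ww}b^2_z)$,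 $a_{12}=2(c^1b^2_w-b^1_wc^2)$, $a_{02}=c^1A^2_{ww}-A^1_{ww}c^2$, $a_{03}=2(b^1_wA^2_{ww}-A^1_{ww}b^2_w)$, regarded as a point of $\mathbb P^9$. *)

From HB Require Import structures.
From mathcomp Require Import all_boot all_order all_algebra.
Set Implicit Arguments. Unset Strict Implicit. Unset Printing Implicit Defensive.
Import Order.TTheory GRing.Theory Num.Theory.
Local Open Scope ring_scope.

(* Symmetric 2-tensor fields on the plane F^2 (F = C in the theorem), written
   in null coordinates (z,w); index 0 = z, index 1 = w.
   [T i j z w] is the component T_{ij} at the point (z,w). *)
Definition field (F : fieldType) := 'I_2 -> 'I_2 -> F -> F -> F.

Section Defs.
Variable F : fieldType.

Definition iz : 'I_2 := ord0.
Definition iw : 'I_2 := ord_max.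

Definition gmet : field F := fun i j _ _ => if i == j then 0 else 1.
Definition ginv (i j : 'I_2) : F := if i == j then 0 else 1.

Definition symmetric (T : field F) := forall i j z w, T i j z w = T j i z w.

Definition trace (L : field F) (z w : F) : F :=
  \sum_(i < 2) \sum_(j < 2) ginv i j * L i j z w.

Definition fzero : field F := fun _ _ _ _ => 0.
Definition lcomb n (Ks : 'I_n -> field F) (a : 'I_n -> F) : field F :=
  fun i j z w => \sum_(k < n) a k * Ks k i j z w.
Definition span n (Ks : 'I_n -> field F) (K : field F) :=
  exists a : 'I_n -> F, K = lcomb Ks a.
Definition lin_indep n (Ks : 'I_n -> field F) :=
  forall a : 'I_n -> F, lcomb Ks a = fzero -> forall k, a k = 0.
Definition is_basis n (V : field F -> Prop) (Ks : 'I_n -> field F) :=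
  lin_indep Ks /\ (forall K, V K <-> span Ks K).
Definition has_dim (V : field F -> Prop) n :=
  exists Ks : 'I_n -> field F, is_basis V Ks.

Definition pair_fam (L1 L2 : field F) : 'I_2 -> field F :=
  fun k => if val k == 0%N then L1 else L2.

Definition sckt (Azz Azw Aww bz bw c : F) : field F :=
  fun i j z w =>
    if (i == iz) && (j == iz) then Azz + 2 * bz * w + c * w ^+ 2
    else if (i == iw) && (j == iw) then Aww + 2 * bw * z + c * z ^+ 2
    else Azw + bz * z + bw * w + c * z * w.

(* Special conformal Killing tensors (by the classification on the plane). *)
Definition is_SCKT (L : field F) :=
  exists Azz Azw Aww bz bw c, L = sckt Azz Azw Aww bz bw c.

Definition to_killing (L : field F) : field F :=
  fun i j z w => L i j z w - trace L z w * gmet i j z w.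

Definition is_Killing (K : field F) :=
  exists L, is_SCKT L /\ K = to_killing L.

Definition in_S20 (L : field F) :=
  exists Azz Aww bz bw c, L = sckt Azz 0 Aww bz bw c.

Record prm := Prm { pAzz : F; pAww : F; pbz : F; pbw : F; pc : F }.
Definition toS20 (p : prm) : field F := sckt (pAzz p) 0 (pAww p) (pbz p) (pbw p) (pc p).

Definition free_superint (W : field F -> Prop) :=
  has_dim W 3 /\ (forall K, W K -> is_Killing K) /\ W gmet.

Definition PW (W : field F -> Prop) (L : field F) := in_S20 L /\ W (to_killing L).

Definition plane_in_S20 (P : field F -> Prop) :=
  has_dim P 2 /\ (forall L, P L -> in_S20 L).

Record pl := Pl { a30 : F; a20 : F; a10 : F; a00 : F; a21 : F;
                  a11 : F; a01 : F; a12 : F; a02 : F; a03 : F }.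

Definition plucker (p1 p2 : prm) : pl :=
  Pl (2 * (pAzz p1 * pbz p2 - pbz p1 * pAzz p2))
     (pAzz p1 * pc p2 - pc p1 * pAzz p2)
     (2 * (pAzz p1 * pbw p2 - pbw p1 * pAzz p2))
     (pAzz p1 * pAww p2 - pAww p1 * pAzz p2)
     (2 * (pbz p1 * pc p2 - pc p1 * pbz p2))
     (4 * (pbz p1 * pbw p2 - pbw p1 * pbz p2))
     (2 * (pbz p1 * pAww p2 - pAww p1 * pbz p2))
     (2 * (pc p1 * pbw p2 - pbw p1 * pc p2))
     (pc p1 * pAww p2 - pAww p1 * pc p2)
     (2 * (pbw p1 * pAww p2 - pAww p1 * pbw p2)).

Definition pl_coords (a : pl) : seq F :=
  [:: a30 a; a20 a; a10 a; a00 a; a21 a; a11 a; a01 a; a12 a; a02 a; a03 a].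

Definition pl_nonzero (a : pl) := exists2 x, x \in pl_coords a & x != 0.

Definition pl_proj_eq (a b : pl) :=
  exists2 k : F, k != 0 & pl_coords a = map (fun x => k * x) (pl_coords b).

Definition plucker_rel (a : pl) :=
  [/\ a03 a * a21 a - a02 a * a11 a + a01 a * a12 a = 0,
      a03 a * a20 a - a02 a * a10 a + a00 a * a12 a = 0,
      a03 a * a30 a - a01 a * a10 a + a00 a * a11 a = 0,
      a02 a * a30 a - a01 a * a20 a + a00 a * a21 a = 0 &
      a12 a * a30 a - a11 a * a20 a + a10 a * a21 a = 0].

Definition skew_rows (a : pl) : seq (seq F) :=
  [:: [:: 0; a30 a; a20 a; a10 a; a00 a];
      [:: - a30 a; 0; a21 a; a11 a; a01 a];
      [:: - a20 a; - a21 a; 0; a12 a; a02 a];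
      [:: - a10 a; - a11 a; - a12 a; 0; a03 a];
      [:: - a00 a; - a01 a; - a02 a; - a03 a; 0]].

Definition skewM (a : pl) : 'M[F]_5 :=
  \matrix_(i < 5, j < 5) nth 0 (nth [::] (skew_rows a) i) j.

Definition PW_basis (W : field F -> Prop) (p1 p2 : prm) :=
  is_basis (PW W) (pair_fam (toS20 p1) (toS20 p2)).

End Defs.

From Pilot Require Import Defs.
From HB Require Import structures.
From mathcomp Require Import all_boot all_order all_algebra.
From mathcomp Require Import reals complex.
From mathcomp Require Import fingroup perm ring.
From Stdlib Require Import FunctionalExtensionality PropExtensionality.
Import Order.TTheory GRing.Theory Num.Theory.
Local Open Scope ring_scope.
Set Implicit Arguments. Unset Strict Implicit.

(* Since [g_zw = 1], an SCKT is an element of [S^2_0] plus [A_zw g], and [to_killing g = - g].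
   The zw-component at the origin vanishes on [to_killing S^2_0] and is [1] on [g], so the
   Killing tensors split as [to_killing S^2_0 (+) <g>]; a free system [W] is then
   [to_killing P_W (+) <g>], which gives the bijection [W <-> P_W].
   In the coordinates [v = (A_zz, 2 b_z, c, 2 b_w, A_ww)] of [S^2_0] the Plücker matrix of
   [span {L^1, L^2}] is [v^1 /\ v^2 = v^1^T v^2 - v^2^T v^1]. A skew matrix [M] with
   [M i j != 0] equals [(column j / M i j) /\ (row i)] as soon as
   [M l m M i j = M l j M i m - M m j M i l] for all [l, m]; this identity holds when the
   Plücker relations (the 4 x 4 Pfaffians of [M]) vanish, and when [M] has rank two because
   rows [i] and [j] then span the row space. *)

Lemma pred_ext (T : Type) (P Q : T -> Prop) : (forall x, P x <-> Q x) -> P = Q.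
Proof.
by move=> PQ; apply: functional_extensionality => x; apply: propositional_extensionality.
Qed.

Definition fam2 (T : Type) (x y : T) : 'I_2 -> T := fun k => if val k == 0%N then x else y.

Definition fam3 (T : Type) (x y t : T) : 'I_3 -> T :=
  fun k => if val k == 0%N then x else if val k == 1%N then y else t.

Section FieldBasics.
Variable F : fieldType.
Implicit Types (K L : field F) (x y : F).

Definition comb2 x K y L : field F := fun i j z w => x * K i j z w + y * L i j z w.

Lemma field_ext K L : (forall i j z w, K i j z w = L i j z w) -> K = L.
Proof.
move=> KL; apply: functional_extensionality => i; apply: functional_extensionality => j.
by apply: functional_extensionality => z; apply: functional_extensionality => w.
Qed.

Lemma ord2P (i : 'I_2) : i = iz \/ i = iw.
Proof. by case: i => [[|[|//]] ?]; [left | right]; apply: val_inj. Qed.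

Lemma traceE L z w : trace L z w = L iz iw z w + L iw iz z w.
Proof.
have E : lift ord0 ord0 = iw :> 'I_2 by apply: val_inj.
by rewrite /trace !big_ord_recl !big_ord0 /ginv /= E; ring.
Qed.

Lemma ord3P (k : 'I_3) : [\/ k = 0, k = 1 | k = 2].
Proof. by case: k => [[|[|[|//]]] ?]; [apply: Or31 | apply: Or32 | apply: Or33]; apply: val_inj. Qed.

Lemma lcomb2E (Ks : 'I_2 -> field F) a :
  lcomb Ks a = comb2 (a ord0) (Ks ord0) (a ord_max) (Ks ord_max).
Proof.
have E : lift ord0 ord0 = ord_max :> 'I_2 by apply: val_inj.
by apply: field_ext => i j z w; rewrite /lcomb !big_ord_recl big_ord0 addr0 E.
Qed.

Lemma lcomb3E (Ks : 'I_3 -> field F) a i j z w : lcomb Ks a i j z w =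
  a 0 * Ks 0 i j z w + a 1 * Ks 1 i j z w + a 2 * Ks 2 i j z w.
Proof.
have E1 : lift ord0 ord0 = 1 :> 'I_3 by apply: val_inj.
have E2 : lift ord0 (lift ord0 ord0) = 2 :> 'I_3 by apply: val_inj.
by rewrite /lcomb !big_ord_recl big_ord0 addr0 addrA E1 E2.
Qed.

End FieldBasics.

Ltac fieldwise :=
  let i := fresh "i" in let j := fresh "j" in
  apply: field_ext => i j ? ?; case: (ord2P i) => ->; case: (ord2P j) => ->;
  rewrite /comb2 /to_killing ?traceE /toS20 /sckt /gmet /fzero /=; ring.

Section KillingTensors.
Variable F : fieldType.
Implicit Types (K L : field F) (p q : prm F) (x y : F).
Local Notation g := (@gmet F).

Lemma to_killing_comb x K y L :
  to_killing (comb2 x K y L) = comb2 x (to_killing K) y (to_killing L).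
Proof. by fieldwise. Qed.

Lemma to_killing0 : to_killing (@fzero F) = @fzero F.
Proof. by fieldwise. Qed.

Lemma to_killing_diag K i z w : to_killing K i i z w = K i i z w.
Proof. by rewrite /to_killing /gmet eqxx mulr0 subr0. Qed.

Lemma to_killing_zw K z w : to_killing K iz iw z w = - K iw iz z w.
Proof. by rewrite /to_killing traceE /gmet /=; ring. Qed.

Lemma to_killing_wz K z w : to_killing K iw iz z w = - K iz iw z w.
Proof. by rewrite /to_killing traceE /gmet /=; ring. Qed.

Lemma to_killing_inj : injective (@to_killing F).
Proof.
move=> K L KL; apply: field_ext => i j z w.
have E i' j' := congr1 (fun T => T i' j' z w) KL.
move: (E iz iz) (E iw iw) (E iz iw) (E iw iz).
rewrite !to_killing_diag !to_killing_zw !to_killing_wz => zz ww /oppr_inj wz /oppr_inj zw.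
by case: (ord2P i) => ->; case: (ord2P j) => ->.
Qed.

Lemma to_killing_S20 Azz Azw Aww bz bw c :
  to_killing (sckt Azz 0 Aww bz bw c) = comb2 1 (to_killing (sckt Azz Azw Aww bz bw c)) Azw g.
Proof. by fieldwise. Qed.

Definition pcomb x p y q : prm F :=
  Prm (x * pAzz p + y * pAzz q) (x * pAww p + y * pAww q) (x * pbz p + y * pbz q)
      (x * pbw p + y * pbw q) (x * pc p + y * pc q).

Lemma toS20_comb x p y q : comb2 x (toS20 p) y (toS20 q) = toS20 (pcomb x p y q).
Proof. by fieldwise. Qed.

Lemma toS20_inj : injective (@toS20 F).
Proof.
case=> a1 a2 a3 a4 a5 [b1 b2 b3 b4 b5] E.
have E' i j z w := congr1 (fun T => T i j z w) E.
move: (E' iz iz 0 0) (E' iw iw 0 0) (E' iz iw 1 0) (E' iz iw 0 1) (E' iz iw 1 1).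
rewrite /toS20 /sckt /= !(expr2, mulr0, mul0r, mulr1, addr0, add0r) => -> -> e3 e4.
by rewrite e3 e4 => /addrI ->.
Qed.

Lemma in_S20E L : in_S20 L <-> exists p, L = toS20 p.
Proof.
split=> [[a [b [c [d [e ->]]]]] | [[a b c d e] ->]]; first by exists (Prm a b c d e).
by exists a, b, c, d, e.
Qed.

Definition g_coord K : F := K iz iw 0 0.

Lemma g_coord_comb x K y L : g_coord (comb2 x K y L) = x * g_coord K + y * g_coord L.
Proof. by []. Qed.

Lemma g_coord_S20 p : g_coord (to_killing (toS20 p)) = 0.
Proof. by rewrite /g_coord to_killing_zw /toS20 /sckt /=; ring. Qed.

Lemma g_coord_g : g_coord g = 1.
Proof. by []. Qed.

Lemma Killing_decomp K : is_Killing K ->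
  exists p c, K = comb2 1 (to_killing (toS20 p)) c g.
Proof.
case=> _ [[Azz [Azw [Aww [bz [bw [c ->]]]]]] ->].
exists (Prm Azz Aww bz bw c), (- Azw); rewrite /toS20 /= (to_killing_S20 _ Azw).
by apply: field_ext => i j z w; rewrite /comb2; ring.
Qed.

Lemma Killing_comb p c : is_Killing (comb2 1 (to_killing (toS20 p)) c g).
Proof.
exists (sckt (pAzz p) (- c) (pAww p) (pbz p) (pbw p) (pc p)); split.
  by do 6 eexists.
rewrite /toS20 (to_killing_S20 _ (- c)).
by apply: field_ext => i j z w; rewrite /comb2; ring.
Qed.

End KillingTensors.

Section Spans.
Variables (F : fieldType) (n : nat).
Implicit Types (Ks : 'I_n -> field F) (K L : field F).

Lemma basis_span (V : field F -> Prop) Ks : is_basis V Ks -> V = Defs.span Ks.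
Proof. by case=> _ VE; apply: pred_ext. Qed.

Lemma span_fam Ks k : Defs.span Ks (Ks k).
Proof.
exists (fun l => (l == k)%:R); apply: field_ext => i j z w.
by rewrite /lcomb (bigD1 k) //= eqxx mul1r big1 ?addr0 // => l /negbTE ->; rewrite mul0r.
Qed.

Lemma span_comb2 Ks x K y L : Defs.span Ks K -> Defs.span Ks L -> Defs.span Ks (comb2 x K y L).
Proof.
case=> a -> [b ->]; exists (fun k => x * a k + y * b k).
apply: field_ext => i j z w; rewrite /comb2 /lcomb !mulr_sumr -big_split.
by apply: eq_bigr => k _ /=; ring.
Qed.

Lemma span_trans m Ks (Ls : 'I_m -> field F) :
  (forall k, Defs.span Ls (Ks k)) -> forall K, Defs.span Ks K -> Defs.span Ls K.
Proof.
move=> KsLs K [a ->]; have [b Eb] := fin_all_exists KsLs.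
exists (fun l => \sum_k a k * b k l); apply: field_ext => i j z w.
rewrite /lcomb; under eq_bigr do rewrite Eb /lcomb mulr_sumr.
rewrite exchange_big; apply: eq_bigr => l _ /=.
by rewrite mulr_suml; apply: eq_bigr => k _; rewrite mulrA.
Qed.

Lemma lcomb_perm Ks (s : 'S_n) a : lcomb (Ks \o s) (a \o s) = lcomb Ks a.
Proof.
apply: field_ext => i j z w.
by rewrite /lcomb [in RHS](reindex_inj (@perm_inj _ s)).
Qed.

Lemma is_basis_perm (V : field F -> Prop) Ks (s : 'S_n) :
  is_basis V Ks -> is_basis V (Ks \o s).
Proof.
case=> indep VE; split=> [b Hb k | K].
  have : lcomb Ks (b \o (s^-1)%g) = @fzero F.
    rewrite -Hb -(lcomb_perm _ s); congr lcomb.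
    by apply: functional_extensionality => l /=; rewrite permK.
  by move/indep/(_ (s k)); rewrite /= permK.
rewrite VE; split; apply: span_trans => k; last exact: span_fam.
by rewrite -[k](permKV s); exact: (span_fam (Ks \o s)).
Qed.

End Spans.

Section FreeSystems.
Variable F : fieldType.
Implicit Types (p q : prm F) (W : field F -> Prop).
Local Notation g := (@gmet F).
Local Notation S20pair p1 p2 := (pair_fam (toS20 p1) (toS20 p2)).

Definition kfam p1 p2 : 'I_3 -> field F := fam3 (to_killing (toS20 p1)) (to_killing (toS20 p2)) g.

Lemma lcomb_S20pair p1 p2 a :
  lcomb (S20pair p1 p2) a = toS20 (pcomb (a ord0) p1 (a ord_max) p2).
Proof. by rewrite lcomb2E /= toS20_comb. Qed.

Lemma lcomb_kfam p1 p2 a :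
  lcomb (kfam p1 p2) a = comb2 1 (to_killing (toS20 (pcomb (a 0) p1 (a 1) p2))) (a 2) g.
Proof.
apply: field_ext => i j z w.
by rewrite lcomb3E -toS20_comb to_killing_comb /comb2 /kfam /fam3 /=; ring.
Qed.

Lemma g_coord_lcomb_kfam p1 p2 a : g_coord (lcomb (kfam p1 p2) a) = a 2.
Proof. by rewrite lcomb_kfam g_coord_comb g_coord_S20 g_coord_g mul1r add0r mulr1. Qed.

Lemma kfam_indep p1 p2 : lin_indep (S20pair p1 p2) -> lin_indep (kfam p1 p2).
Proof.
move=> indep a Ha.
have a2 : a 2 = 0 by rewrite -(g_coord_lcomb_kfam p1 p2) Ha.
have /indep a01 : lcomb (S20pair p1 p2) (fam2 (a 0) (a 1)) = @fzero F.
  apply: to_killing_inj; rewrite lcomb_S20pair to_killing0 -Ha lcomb_kfam a2.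
  by apply: field_ext => i j z w; rewrite /comb2 /=; ring.
by move=> k; case: (ord3P k) => ->; [exact: (a01 ord0) | exact: (a01 ord_max) | ].
Qed.

Lemma PW_span_kfam p1 p2 : PW (Defs.span (kfam p1 p2)) = Defs.span (S20pair p1 p2).
Proof.
apply: pred_ext => L; split.
  case=> /in_S20E [q ->] [a Ea].
  have a2 : a 2 = 0 by rewrite -(g_coord_lcomb_kfam p1 p2) -Ea g_coord_S20.
  exists (fam2 (a 0) (a 1)); rewrite lcomb_S20pair; apply: to_killing_inj.
  by rewrite Ea lcomb_kfam a2; apply: field_ext => i j z w; rewrite /comb2 /fam3 /=; ring.
case=> a ->; rewrite lcomb_S20pair; split; first by apply/in_S20E; eexists.
exists (fam3 (a ord0) (a ord_max) 0); rewrite lcomb_kfam.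
by apply: field_ext => i j z w; rewrite /comb2 /fam3 /=; ring.
Qed.

Lemma span_kfam_Killing p1 p2 K : Defs.span (kfam p1 p2) K -> is_Killing K.
Proof. by case=> a ->; rewrite lcomb_kfam; exact: Killing_comb. Qed.

Lemma free_superint_span_kfam p1 p2 :
  lin_indep (S20pair p1 p2) -> free_superint (Defs.span (kfam p1 p2)).
Proof.
move=> indep; split; first by exists (kfam p1 p2); split; [exact: kfam_indep |].
by split; [exact: span_kfam_Killing | exact: (span_fam (kfam p1 p2) 2)].
Qed.

(* Exchange: [g] replaces the basis vector [Ks 2], and subtracting multiples of
   [g] from [Ks 0] and [Ks 1] lands them in [to_killing S^2_0]. *)
Section Exchange.
Variables (W : field F -> Prop) (Ks : 'I_3 -> field F) (a : 'I_3 -> F).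
Variables (p1 p2 : prm F) (c1 c2 : F).
Hypotheses (basis : is_basis W Ks) (ga : g = lcomb Ks a) (a2 : a 2 != 0).
Hypotheses (E1 : Ks 0 = comb2 1 (to_killing (toS20 p1)) c1 g)
           (E2 : Ks 1 = comb2 1 (to_killing (toS20 p2)) c2 g).

Let gE i j z w : g i j z w = a 0 * Ks 0 i j z w + a 1 * Ks 1 i j z w + a 2 * Ks 2 i j z w.
Proof. by rewrite ga lcomb3E. Qed.

Lemma exchange_indep : lin_indep (S20pair p1 p2).
Proof.
have [indep _] := basis; move=> b Hb; set s := b ord0 * c1 + b ord_max * c2.
have : lcomb Ks (fam3 (b ord0 - s * a 0) (b ord_max - s * a 1) (- (s * a 2))) = @fzero F.
  apply: field_ext => i j z w.
  have h := congr1 (fun T => to_killing T i j z w) Hb.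
  rewrite lcomb2E to_killing_comb to_killing0 /comb2 /= in h.
  rewrite lcomb3E /fam3 /= (_ : _ + _ = b ord0 * Ks 0 i j z w + b ord_max * Ks 1 i j z w
                                  - s * g i j z w); last by rewrite gE; ring.
  by apply: etrans h; rewrite E1 E2 /comb2 /s; ring.
move/indep => b0.
have s0 : s = 0.
  by move: (b0 2); rewrite /fam3 /= => /eqP; rewrite oppr_eq0 mulf_eq0 (negbTE a2) orbF => /eqP.
move: (b0 0) (b0 1); rewrite /fam3 /= s0 !mul0r !subr0 => B0 B1 k.
by case: (ord2P k) => ->.
Qed.

Lemma exchange_span : W = Defs.span (kfam p1 p2).
Proof.
rewrite (basis_span basis); apply: pred_ext => K; split; apply: span_trans => k.
  case: (ord3P k) => ->.
  - exists (fam3 1 0 c1).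
    by apply: field_ext => i j z w; rewrite lcomb3E E1 /comb2 /kfam /fam3 /=; ring.
  - exists (fam3 0 1 c2).
    by apply: field_ext => i j z w; rewrite lcomb3E E2 /comb2 /kfam /fam3 /=; ring.
  - exists (fam3 (- (a 0 / a 2)) (- (a 1 / a 2)) ((1 - a 0 * c1 - a 1 * c2) / a 2)).
    apply: field_ext => i j z w; rewrite lcomb3E /kfam /fam3 /=.
    have -> : Ks 2 i j z w = (g i j z w - a 0 * Ks 0 i j z w - a 1 * Ks 1 i j z w) / a 2.
      by rewrite gE; field.
    by rewrite E1 E2 /comb2; field.
have span_g : Defs.span Ks g by exists a.
case: (ord3P k) => ->; rewrite /kfam /fam3 /=; last exact: span_g.
  have -> : to_killing (toS20 p1) = comb2 1 (Ks 0) (- c1) g.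
    by rewrite E1; apply: field_ext => i j z w; rewrite /comb2; ring.
  exact: span_comb2 (span_fam _ _) span_g.
have -> : to_killing (toS20 p2) = comb2 1 (Ks 1) (- c2) g.
  by rewrite E2; apply: field_ext => i j z w; rewrite /comb2; ring.
exact: span_comb2 (span_fam _ _) span_g.
Qed.

End Exchange.

Lemma free_superint_kfam W : free_superint W ->
  exists p1 p2, lin_indep (S20pair p1 p2) /\ W = Defs.span (kfam p1 p2).
Proof.
case=> [[Ks basis] [Kill Wg]]; rewrite (basis_span basis) in Wg Kill.
case: Wg => a ga.
have [k ak] : exists k, a k != 0.
  case/boolP: [exists k, a k != 0] => [/existsP // | /existsPn a0].
  have := g_coord_g F; rewrite ga /g_coord /lcomb big1 => [/eqP | l _].
    by rewrite eq_sym oner_eq0.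
  by move: (a0 l); rewrite negbK => /eqP ->; rewrite mul0r.
pose s := tperm k 2; have basis_s := is_basis_perm s basis.
have ga_s : g = lcomb (Ks \o s) (a \o s) by rewrite lcomb_perm.
have a2 : (a \o s) 2 != 0 by rewrite /= tpermR.
have [p1 [c1 E1]] := Killing_decomp (Kill _ (span_fam Ks (s 0))).
have [p2 [c2 E2]] := Killing_decomp (Kill _ (span_fam Ks (s 1))).
exists p1, p2; split; first exact: exchange_indep basis_s ga_s a2 E1 E2.
exact: exchange_span basis_s ga_s a2 E1 E2.
Qed.

Lemma free_superint_incl W1 W2 : free_superint W1 -> free_superint W2 ->
  (forall L, PW W1 L -> PW W2 L) -> forall K, W1 K -> W2 K.
Proof.
case=> [[Ks1 b1] [Kill1 g1]] [[Ks2 b2] [_ g2]] PW12 K W1K.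
have [p [c Kp]] := Killing_decomp (Kill1 K W1K).
have /PW12 [_] : PW W1 (toS20 p).
  split; first by apply/in_S20E; exists p.
  have -> : to_killing (toS20 p) = comb2 1 K (- c) g.
    by rewrite Kp; apply: field_ext => i j z w; rewrite /comb2; ring.
  by rewrite (basis_span b1) in W1K g1 *; exact: span_comb2.
by rewrite (basis_span b2) in g2 * => ?; rewrite Kp; exact: span_comb2.
Qed.

Lemma plane_in_S20_span p1 p2 :
  lin_indep (S20pair p1 p2) -> plane_in_S20 (Defs.span (S20pair p1 p2)).
Proof.
move=> indep; split; first by exists (S20pair p1 p2).
by move=> L [a ->]; rewrite lcomb_S20pair; apply/in_S20E; eexists.
Qed.

Lemma plane_in_S20P P : plane_in_S20 P ->
  exists p1 p2, lin_indep (S20pair p1 p2) /\ P = Defs.span (S20pair p1 p2).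
Proof.
case=> [[Ks basis] S20P]; have [indep _] := basis.
have S20Ks k : exists p, Ks k = toS20 p.
  by apply/in_S20E/S20P; rewrite (basis_span basis); exact: span_fam.
have [[p1 E1] [p2 E2]] := (S20Ks ord0, S20Ks ord_max).
have KsE : Ks = S20pair p1 p2.
  by apply: functional_extensionality => k; case: (ord2P k) => ->; [exact: E1 | exact: E2].
by exists p1, p2; rewrite -KsE; split => //; exact: basis_span.
Qed.

End FreeSystems.

Section Wedge.
Variables (F : fieldType) (n : nat).
Implicit Types (u v : 'rV[F]_n) (M : 'M[F]_n).

Definition wedge u v : 'M[F]_n := u^T *m v - v^T *m u.

Definition decomposable M := exists u v, M = wedge u v.

Lemma wedgeE u v i j : wedge u v i j = u 0 i * v 0 j - v 0 i * u 0 j.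
Proof. by rewrite !mxE !big_ord1 !mxE. Qed.

Lemma wedge_comb u v a b c d :
  wedge (a *: u + b *: v) (c *: u + d *: v) = (a * d - b * c) *: wedge u v.
Proof. by apply/matrixP => i j; rewrite [RHS]mxE !wedgeE !mxE; ring. Qed.

Lemma wedgeC u v : wedge v u = - wedge u v.
Proof. by apply/matrixP => i j; rewrite [RHS]mxE !wedgeE; ring. Qed.

Lemma wedgeZl k u v : wedge (k *: u) v = k *: wedge u v.
Proof. by apply/matrixP => i j; rewrite [RHS]mxE !wedgeE !mxE; ring. Qed.

Lemma rank_wedge u v : (\rank (wedge u v) <= 2)%N.
Proof.
rewrite /wedge -mulmxN; apply: leq_trans (mxrank_add _ _) _.
by apply: (@leq_add _ _ 1 1); apply: leq_trans (mxrankM_maxr _ _) (rank_leq_row _).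
Qed.

Lemma wedge_neq0P u v :
  wedge u v != 0 <-> (forall x y, x *: u + y *: v = 0 -> x = 0 /\ y = 0).
Proof.
split=> [/matrix0Pn [i [j]] | indep].
  rewrite wedgeE => uv0 x y /rowP uvE.
  have E l : x * u 0 l = - (y * v 0 l).
    by apply/eqP; rewrite -addr_eq0; move: (uvE l); rewrite !mxE => ->.
  have E' l : y * v 0 l = - (x * u 0 l) by rewrite E opprK.
  split; apply: (mulIf uv0); rewrite mul0r.
    by transitivity ((x * u 0 i) * v 0 j - v 0 i * (x * u 0 j)); [ring | rewrite !E; ring].
  by transitivity (u 0 i * (y * v 0 j) - (y * v 0 i) * u 0 j);
    [ring | rewrite !E'; ring].
apply/negP => /eqP uv0.
have wE i l : u 0 i * v 0 l = v 0 i * u 0 l.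
  by apply/eqP; rewrite -subr_eq0 -wedgeE uv0 mxE.
case: (boolP (u == 0)) => [/eqP u0 | /matrix0Pn [o [i ui]]].
  have [] := indep 1 0; first by rewrite u0 scaler0 scale0r addr0.
  by move/eqP; rewrite oner_eq0.
move: ui; rewrite (ord1 o) => ui.
have [|_] := indep (v 0 i) (- u 0 i).
  by apply/rowP => l; rewrite !mxE mulNr wE subrr.
by move/eqP; rewrite oppr_eq0 (negbTE ui).
Qed.

Lemma mem_span_wedge u w v1 v2 (k : F) : k != 0 -> wedge u w = k *: wedge v1 v2 ->
  wedge v1 v2 != 0 -> exists x y, u = x *: v1 + y *: v2.
Proof.
move=> k0 uw /matrix0Pn [i [j]]; rewrite wedgeE => d0.
set d := _ - _ in d0.
have vE l m : v1 0 l * v2 0 m - v2 0 l * v1 0 m = k^-1 * (u 0 l * w 0 m - w 0 l * u 0 m).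
  have uwE : wedge u w l m = k * wedge v1 v2 l m by rewrite uw mxE.
  by rewrite -!wedgeE uwE mulKf.
exists ((u 0 i * v2 0 j - v2 0 i * u 0 j) / d), ((v1 0 i * u 0 j - u 0 i * v1 0 j) / d).
apply/rowP => l; rewrite !mxE.
(* By [vE] the [3 x 3] minors of [(u, v1, v2)] are those of [(u, u, w)] over [k]. *)
have E : u 0 l * d = (u 0 i * v2 0 j - v2 0 i * u 0 j) * v1 0 l
                    + (v1 0 i * u 0 j - u 0 i * v1 0 j) * v2 0 l.
  transitivity (u 0 i * (v1 0 l * v2 0 j - v2 0 l * v1 0 j)
                + u 0 j * (v1 0 i * v2 0 l - v2 0 i * v1 0 l)); last by ring.
  by rewrite /d !vE; ring.
by rewrite -[u 0 l](mulfK d0) E; field.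
Qed.

Lemma decomposable_pivot M i j : M i j != 0 ->
  (forall l m, M l m * M i j = M l j * M i m - M m j * M i l) -> decomposable M.
Proof.
move=> Mij pivot; exists (\row_l (M l j / M i j)), (row i M).
apply/matrixP => l m; rewrite wedgeE !mxE.
by rewrite -[M l m](mulfK Mij) pivot; field.
Qed.

End Wedge.

Ltac case_ord5 i := case: i => [[|[|[|[|[|//]]]]] ?].

Section SkewMatrices.
Variables (F : fieldType) (n : nat) (M : 'M[F]_n).
Hypotheses (Mdiag : forall i, M i i = 0) (Manti : forall i j, M j i = - M i j).

Lemma rank_rowsub_pivot i j : M i j != 0 -> \rank (rowsub (fam2 i j) M) = 2%N.
Proof.
move=> Mij; apply/eqP/row_freeP.
exists (colsub (fam2 j i) 1%:M *m diag_mx (\row_k (if val k == 0%N then (M i j)^-1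
                                                   else - (M i j)^-1))).
rewrite mulmxA mulmx_colsub mulmx1 mul_mx_diag.
apply/matrixP => r k; rewrite !mxE.
by case: (ord2P r) => ->; case: (ord2P k) => ->;
  rewrite /fam2 /= ?Mdiag ?(Manti i j) ?mul0r ?mulrNN ?divff.
Qed.

Lemma skew_rank_ge2 i j : M i j != 0 -> (2 <= \rank M)%N.
Proof. by move=> Mij; rewrite -(rank_rowsub_pivot Mij) mxrankS ?rowsub_sub. Qed.

Lemma skew_rank2_pivot i j : M i j != 0 -> \rank M = 2%N ->
  forall l m, M l m * M i j = M l j * M i m - M m j * M i l.
Proof.
move=> Mij rk l m.
have rowsM : (M <= rowsub (fam2 i j) M)%MS.
  by rewrite -(mxrank_leqif_sup (rowsub_sub _ M)).2 rank_rowsub_pivot ?rk.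
have /submxP [D rowl] := submx_trans (row_sub l M) rowsM.
have Ml m' : M l m' = D 0 ord0 * M i m' + D 0 ord_max * M j m'.
  have E : lift ord0 ord0 = ord_max :> 'I_2 by apply: val_inj.
  by have := congr1 (fun X : 'rV[F]_n => X 0 m') rowl; rewrite !mxE big_ord_recl big_ord1 !mxE E.
by rewrite (Manti l i) (Manti j m) !Ml !Mdiag (Manti i j); ring.
Qed.

End SkewMatrices.

Section PluckerCoordinates.
Variable F : fieldType.
Implicit Types a b : pl F.

Lemma skewM_diag a i : skewM a i i = 0.
Proof. by rewrite mxE; case_ord5 i. Qed.

Lemma skewM_anti a i j : skewM a j i = - skewM a i j.
Proof. by rewrite !mxE; case_ord5 i; case_ord5 j; rewrite /= ?opprK ?oppr0. Qed.

Lemma pl_coords_skewM a : pl_coords a =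
  [:: skewM a 0 1; skewM a 0 2; skewM a 0 3; skewM a 0 4; skewM a 1 2;
      skewM a 1 3; skewM a 1 4; skewM a 2 3; skewM a 2 4; skewM a 3 4].
Proof. by rewrite !mxE. Qed.

Lemma skewM_entry a i j :
  [\/ skewM a i j = 0, skewM a i j \in pl_coords a | - skewM a i j \in pl_coords a].
Proof.
rewrite mxE /pl_coords; case_ord5 i; case_ord5 j; rewrite /=;
  first [ by apply: Or31 | by apply: Or32; rewrite !inE eqxx ?orbT
        | by apply: Or33; rewrite opprK !inE eqxx ?orbT ].
Qed.

Lemma pl_nonzeroP a : pl_nonzero a <-> skewM a != 0.
Proof.
split=> [[x] | /matrix0Pn [i [j aij]]].
  rewrite pl_coords_skewM !inE => + x0; apply: contraPneq => a0.
  by rewrite a0 !mxE !orbb => /eqP x0'; rewrite x0' eqxx in x0.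
case: (skewM_entry a i j) => [a0 | ai | ani]; first by rewrite a0 eqxx in aij.
  by exists (skewM a i j).
by exists (- skewM a i j); rewrite ?oppr_eq0.
Qed.

Lemma skewM_scale a b k :
  pl_coords a = map (fun x => k * x) (pl_coords b) <-> skewM a = k *: skewM b.
Proof.
split=> [| E]; last by rewrite !pl_coords_skewM E !mxE.
case: a b => ? ? ? ? ? ? ? ? ? ? [? ? ? ? ? ? ? ? ? ?] /= [-> -> -> -> -> -> -> -> -> ->].
by apply/matrixP => i j; rewrite !mxE; case_ord5 i; case_ord5 j; rewrite /=; ring.
Qed.

Lemma pl_proj_eqP a b : pl_proj_eq a b <-> exists2 k, k != 0 & skewM a = k *: skewM b.
Proof. by split=> -[k k0 /skewM_scale E]; exists k. Qed.

Lemma plucker_rel_wedge a u v : skewM a = wedge u v -> plucker_rel a.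
Proof.
move=> E; have := pl_coords_skewM a; rewrite E !wedgeE.
by case: a {E} => ? ? ? ? ? ? ? ? ? ? [-> -> -> -> -> -> -> -> -> ->]; split => /=; ring.
Qed.

(* The five Plücker relations are the [4 x 4] Pfaffians of [skewM a]; every other
   quadruple of indices yields one of them up to sign, or a trivial identity. *)
Lemma plucker_rel_pivot a : plucker_rel a -> forall i j l m,
  skewM a l m * skewM a i j = skewM a l j * skewM a i m - skewM a m j * skewM a i l.
Proof.
case: a => ? ? ? ? ? ? ? ? ? ? [] /= r1 r2 r3 r4 r5 i j l m.
apply/eqP; rewrite -subr_eq0 !mxE; apply/eqP.
case_ord5 i; case_ord5 j; case_ord5 l; case_ord5 m; rewrite /=;
  let use r := match type of r with ?e = 0 =>
    first [ transitivity (e * 1); [ring | by rewrite r mul0r]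
          | transitivity (e * -1); [ring | by rewrite r mul0r] ] end in
  first [ ring | use r1 | use r2 | use r3 | use r4 | use r5 ].
Qed.

Lemma plucker_relP a : skewM a != 0 -> plucker_rel a <-> decomposable (skewM a).
Proof.
move=> /matrix0Pn [i [j aij]]; split=> [rel | [u [v /plucker_rel_wedge //]]].
exact: decomposable_pivot aij (plucker_rel_pivot rel i j).
Qed.

Lemma rank_skewM_2 a : skewM a != 0 -> \rank (skewM a) = 2%N <-> decomposable (skewM a).
Proof.
move=> /matrix0Pn [i [j aij]]; split=> [rk | [u [v E]]].
  exact: decomposable_pivot aij (skew_rank2_pivot (skewM_diag a) (skewM_anti a) aij rk).
by apply/eqP; rewrite eqn_leq {1}E rank_wedge (skew_rank_ge2 (skewM_diag a) (skewM_anti a) aij).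
Qed.

End PluckerCoordinates.

Section S20Coordinates.
Variable F : fieldType.
Implicit Types (p q : prm F) (W : field F -> Prop).
Local Notation S20pair p1 p2 := (pair_fam (toS20 p1) (toS20 p2)).

(* Coordinates on [S^2_0] in which the Plücker coordinates are the exterior
   product. *)
Definition pvec p : 'rV[F]_5 :=
  \row_i nth 0 [:: pAzz p; 2 * pbz p; pc p; 2 * pbw p; pAww p] i.

Lemma skewM_plucker p1 p2 : skewM (plucker p1 p2) = wedge (pvec p1) (pvec p2).
Proof.
by apply/matrixP => i j; rewrite wedgeE !mxE; case_ord5 i; case_ord5 j; rewrite /=; ring.
Qed.

Lemma pvec_comb x p y q : pvec (pcomb x p y q) = x *: pvec p + y *: pvec q.
Proof. by apply/rowP => i; rewrite !mxE; case_ord5 i; rewrite /=; ring. Qed.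

Lemma mem_span_S20pair q1 q2 p :
  Defs.span (S20pair q1 q2) (toS20 p) -> exists x y, p = pcomb x q1 y q2.
Proof. by case=> a; rewrite lcomb_S20pair => /toS20_inj ->; do 2 eexists. Qed.

Hypothesis two_neq0 : (2 : F) != 0.

Definition prm_of (v : 'rV[F]_5) : prm F :=
  Prm (v 0 0) (v 0 4) (v 0 1 / 2) (v 0 3 / 2) (v 0 2).

Lemma pvecK : cancel pvec prm_of.
Proof. by case=> ? ? ? ? ?; rewrite /prm_of !mxE /= !(mulrC 2) !mulfK. Qed.

Lemma prm_ofK : cancel prm_of pvec.
Proof.
move=> v; apply/rowP => i; rewrite !mxE; case_ord5 i; rewrite /= ?(mulrC 2) ?divfK //;
  by congr (v 0 _); apply: val_inj.
Qed.

Lemma toS20_eq0 q : toS20 q = @fzero F <-> pvec q = 0.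
Proof.
have E0 : toS20 (Prm 0 0 0 0 0) = @fzero F by fieldwise.
have V0 : pvec (Prm 0 0 0 0 0) = 0.
  by apply/rowP => i; rewrite !mxE; case_ord5 i; rewrite /= ?mulr0.
by rewrite -E0 -V0; split=> [/toS20_inj -> | /(can_inj pvecK) ->].
Qed.

Lemma lin_indep_S20pair p1 p2 :
  lin_indep (S20pair p1 p2) <-> wedge (pvec p1) (pvec p2) != 0.
Proof.
split=> [indep | /wedge_neq0P indep a].
  apply/wedge_neq0P => x y xy.
  have /indep xy0 : lcomb (S20pair p1 p2) (fam2 x y) = @fzero F.
    by rewrite lcomb_S20pair toS20_eq0 pvec_comb; exact: xy.
  exact: conj (xy0 ord0) (xy0 ord_max).
rewrite lcomb_S20pair toS20_eq0 pvec_comb => /indep [a0 a1] k.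
by case: (ord2P k) => ->.
Qed.

Lemma pl_nonzero_plucker p1 p2 : pl_nonzero (plucker p1 p2) <-> lin_indep (S20pair p1 p2).
Proof.
apply: iff_trans (pl_nonzeroP _) _; rewrite skewM_plucker.
exact: iff_sym (lin_indep_S20pair _ _).
Qed.

Lemma PW_basis_plucker W p1 p2 q1 q2 : PW_basis W p1 p2 -> PW_basis W q1 q2 ->
  pl_proj_eq (plucker p1 p2) (plucker q1 q2).
Proof.
move=> bp bq; have [/pl_nonzero_plucker/pl_nonzeroP p0 _] := bp.
have mem k : exists x y, S20pair p1 p2 k = toS20 (pcomb x q1 y q2).
  have : Defs.span (S20pair q1 q2) (S20pair p1 p2 k).
    by rewrite -(basis_span bq) (basis_span bp); exact: span_fam.
  by case: (ord2P k) => -> /mem_span_S20pair [x [y ->]]; exists x, y.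
have [[x1 [y1 /toS20_inj E1]] [x2 [y2 /toS20_inj E2]]] := (mem ord0, mem ord_max).
apply/pl_proj_eqP; exists (x1 * y2 - y1 * x2).
  by move: p0; rewrite E1 E2 skewM_plucker !pvec_comb wedge_comb; apply: contraNneq => ->;
     rewrite scale0r.
by rewrite E1 E2 !skewM_plucker !pvec_comb wedge_comb.
Qed.

Lemma span_S20pair_sub p1 p2 q1 q2 (k : F) : k != 0 ->
  wedge (pvec q1) (pvec q2) = k *: wedge (pvec p1) (pvec p2) -> lin_indep (S20pair p1 p2) ->
  forall L, Defs.span (S20pair q1 q2) L -> Defs.span (S20pair p1 p2) L.
Proof.
move=> k0 qp /lin_indep_S20pair indep; apply: span_trans => r.
have mem q w (k' : F) : k' != 0 -> wedge (pvec q) (pvec w) = k' *: wedge (pvec p1) (pvec p2) ->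
    Defs.span (S20pair p1 p2) (toS20 q).
  move=> k'0 /(mem_span_wedge k'0) /(_ indep) [x [y qE]].
  exists (fam2 x y); rewrite lcomb_S20pair; congr toS20.
  by apply: (can_inj pvecK); rewrite pvec_comb.
case: (ord2P r) => ->; first exact: mem k0 qp.
by apply: (mem _ q1 (- k)); rewrite ?oppr_eq0 // wedgeC qp scaleNr.
Qed.

Lemma span_S20pair_plucker p1 p2 q1 q2 : pl_proj_eq (plucker p1 p2) (plucker q1 q2) ->
  lin_indep (S20pair p1 p2) -> Defs.span (S20pair p1 p2) = Defs.span (S20pair q1 q2).
Proof.
move=> /pl_proj_eqP [k k0]; rewrite !skewM_plucker => pq indep.
have qp : wedge (pvec q1) (pvec q2) = k^-1 *: wedge (pvec p1) (pvec p2).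
  by rewrite pq scalerA mulVf // scale1r.
have indepq : lin_indep (S20pair q1 q2).
  apply/lin_indep_S20pair; move/lin_indep_S20pair: indep; rewrite pq.
  by apply: contraNneq => ->; rewrite scaler0.
apply: pred_ext => L; split; first exact: span_S20pair_sub k0 pq indepq L.
by apply: span_S20pair_sub qp indep L; rewrite invr_eq0.
Qed.

Lemma decomposable_image a : skewM a != 0 -> decomposable (skewM a) <->
  exists W p1 p2, [/\ free_superint W, PW_basis W p1 p2 & pl_proj_eq (plucker p1 p2) a].
Proof.
move=> a0; split=> [[u [v E]] | [W [p1 [p2 [_ _ /pl_proj_eqP [k k0 E]]]]]].
  have Ep : skewM (plucker (prm_of u) (prm_of v)) = skewM a by rewrite skewM_plucker !prm_ofK E.
  have indep : lin_indep (S20pair (prm_of u) (prm_of v)).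
    by apply/pl_nonzero_plucker/pl_nonzeroP; rewrite Ep.
  exists (Defs.span (kfam (prm_of u) (prm_of v))), (prm_of u), (prm_of v); split.
  - exact: free_superint_span_kfam.
  - by rewrite /PW_basis PW_span_kfam.
  - by apply/pl_proj_eqP; exists 1; rewrite ?oner_neq0 ?scale1r.
exists (k^-1 *: pvec p1), (pvec p2).
by rewrite wedgeZl -skewM_plucker E scalerA mulVf ?scale1r.
Qed.

End S20Coordinates.

Theorem proposition2p8 (R : realType) :
  (* W |-> P_W maps F into G_2(S^2_0) ... *)
  (forall W : field R[i] -> Prop, free_superint W -> plane_in_S20 (PW W)) /\
  (* ... injectively ... *)
  (forall W1 W2 : field R[i] -> Prop, free_superint W1 -> free_superint W2 ->
     (forall L, PW W1 L <-> PW W2 L) -> (forall K, W1 K <-> W2 K)) /\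
  (* ... and surjectively. *)
  (forall P : field R[i] -> Prop, plane_in_S20 P ->
     exists2 W, free_superint W & (forall L, P L <-> PW W L)) /\
  (* The Plücker point of P_W is a well-defined point of P^9 ... *)
  (forall (W : field R[i] -> Prop) p1 p2 q1 q2, free_superint W ->
     PW_basis W p1 p2 -> PW_basis W q1 q2 ->
     pl_nonzero (plucker p1 p2) /\ pl_proj_eq (plucker p1 p2) (plucker q1 q2)) /\
  (* ... the composite map F -> P^9 is injective ... *)
  (forall (W1 W2 : field R[i] -> Prop) p1 p2 q1 q2, free_superint W1 -> free_superint W2 ->
     PW_basis W1 p1 p2 -> PW_basis W2 q1 q2 ->
     pl_proj_eq (plucker p1 p2) (plucker q1 q2) -> (forall K, W1 K <-> W2 K)) /\
  (* ... and its image is the locus of rank-2 skew matrices = Plücker relations. *)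
  (forall a : pl R[i], pl_nonzero a ->
     (plucker_rel a <-> \rank (skewM a) = 2%N) /\
     (plucker_rel a <-> exists (W : field R[i] -> Prop) p1 p2, [/\ free_superint W, PW_basis W p1 p2 &
                                         pl_proj_eq (plucker p1 p2) a])).
Proof.
have two : (2 : R[i]) != 0 by rewrite pnatr_eq0.
split.
  move=> W /free_superint_kfam [p1 [p2 [indep ->]]].
  by rewrite PW_span_kfam; exact: plane_in_S20_span.
split.
  by move=> W1 W2 f1 f2 PWE K; split; apply: free_superint_incl => // L /PWE.
split.
  move=> P /plane_in_S20P [p1 [p2 [indep ->]]].
  by exists (Defs.span (kfam p1 p2)); [exact: free_superint_span_kfam | rewrite PW_span_kfam].
split.
  move=> W p1 p2 q1 q2 _ bp bq; split; last exact: PW_basis_plucker bp bq.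
  by apply/pl_nonzero_plucker; case: bp.
split.
  move=> W1 W2 p1 p2 q1 q2 f1 f2 bp bq pq.
  have PWE : PW W1 = PW W2.
    by rewrite (basis_span bp) (basis_span bq); apply: span_S20pair_plucker pq _; case: bp.
  by move=> K; split; apply: free_superint_incl => // L; rewrite PWE.
move=> a /pl_nonzeroP a0; split.
  exact: iff_trans (plucker_relP a0) (iff_sym (rank_skewM_2 a0)).
exact: iff_trans (plucker_relP a0) (decomposable_image two a0).
Qed.
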